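(* Let $A$ and $B$ be two $m\times m$ coloring matrices. If $A$ and $B$ are tree coloring equivalent, then $A$ and $B$ have the same number of entries equal to $1$. If $A$ and $B$ are strictly tree coloring equivalent, then for every $1\le i\le m$, row $i$ of $A$ and row $i$ of $B$ contain the same number of ones.
   Context: A plane tree is an unlabeled rooted tree in which the children of every vertex are linearly ordered (left to right). A coloring matrix is an $m\times m$ matrix $A=(a_{ij})$ with entries in $\{0,1\}$. Given $A$, an $A$-coloring of a plane tree assigns to each vertex a color in $\{1,\dots,m\}$ such that whenever a vertex of color $j$ is a child of a vertex of color $i$, we have $a_{ij}=1$. Let $t_A(n)$ be the number of pairs (plane tree with $n$ vertices, $A$-coloring of it), and $t_A^{(i)}(n)$ the number of those in which the root has color $i$. Two $m\times m$ coloring matrices $A,B$ are tree coloring equivalent if $t_A(n)=t_B(n)$ for all $n\ge1$, and strictly tree coloring equivalent if $t_A^{(i)}(n)=t_B^{(i)}(n)$ for all $n\ge1$ and all $1\le i\le m$. *)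

From mathcomp Require Import all_boot all_algebra.
From Stdlib Require Import List.
Set Implicit Arguments. Unset Strict Implicit. Unset Printing Implicit Defensive.

(* A plane tree whose vertices carry colors in 'I_m: a node has a color and an
   ordered (left-to-right) list of children.  Such a "colored plane tree" is
   exactly a pair (plane tree, coloring of its vertices). *)
Inductive ctree (m : nat) : Type := CNode of 'I_m & list (ctree m).
Arguments CNode {m}.

Definition root_color {m} (t : ctree m) : 'I_m := let: CNode c _ := t in c.

Fixpoint nverts {m} (t : ctree m) : nat :=
  let: CNode _ ch := t in (fold_right (fun c acc => nverts c + acc) 0 ch).+1.

Fixpoint valid {m} (A : 'M[bool]_m) (t : ctree m) : Prop :=
  let: CNode c ch := t in
  fold_right (fun u acc => A c (root_color u) = true /\ valid A u /\ acc) True ch.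

Definition troot_count {m} (A : 'M[bool]_m) (i : 'I_m) (n k : nat) : Prop :=
  exists s : list (ctree m), NoDup s /\ length s = k /\
    forall t, In t s <-> (valid A t /\ nverts t = n /\ root_color t = i).

Definition tcount {m} (A : 'M[bool]_m) (n k : nat) : Prop :=
  exists s : list (ctree m), NoDup s /\ length s = k /\
    forall t, In t s <-> (valid A t /\ nverts t = n).

Definition tree_col_equiv {m} (A B : 'M[bool]_m) : Prop :=
  forall n k, 1 <= n -> (tcount A n k <-> tcount B n k).

Definition strict_tree_col_equiv {m} (A B : 'M[bool]_m) : Prop :=
  forall n k (i : 'I_m), 1 <= n -> (troot_count A i n k <-> troot_count B i n k).

Definition ones {m} (A : 'M[bool]_m) : nat := \sum_(i < m) \sum_(j < m) (A i j : nat).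
Definition row_ones {m} (A : 'M[bool]_m) (i : 'I_m) : nat := \sum_(j < m) (A i j : nat).

(* A colored plane tree with two vertices is a root of color i with one child of
   color j, and it is A-colored exactly when a_ij = 1.  Hence t_A(2) is the number
   of ones of A and t_A^(i)(2) the number of ones in row i, and both are read off
   from the equivalence at n = 2. *)
From Stdlib Require Import List FinFun.
From mathcomp Require Import all_boot all_algebra.

Lemma InP {T : eqType} (x : T) (s : seq T) : reflect (In x s) (x \in s).
Proof.
elim: s => [|y s IH] /=; first by right.
rewrite in_cons; apply: (iffP orP).
- by case=> [/eqP ->|/IH]; [left|right].
- by case=> [->|/IH]; [left|right].
Qed.

Lemma uniq_NoDup {T : eqType} {s : seq T} : uniq s -> NoDup s.
Proof.
elim: s => [|y s IH] /=; first by constructor.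
by case/andP=> /InP y_notin_s /IH; constructor.
Qed.

Lemma length_size {T : Type} (s : list T) : length s = size s.
Proof. by elim: s => //= x s ->. Qed.

Section ListCardinality.

Variable T : Type.

(* [tcount] and [troot_count] unfold to instances of [has_card]. *)
Definition has_card (P : T -> Prop) (k : nat) : Prop :=
  exists s : list T, NoDup s /\ length s = k /\ forall t, In t s <-> P t.

Lemma has_card_unique {P : T -> Prop} {k1 k2 : nat} :
  has_card P k1 -> has_card P k2 -> k1 = k2.
Proof.
case=> s1 [nd1 [<- s1P]] [s2 [nd2 [<- s2P]]].
by apply/anti_leq/andP; split; apply/leP; apply: NoDup_incl_length => // t;
  [move/s1P/s2P | move/s2P/s1P].
Qed.

Lemma has_card_map (U : eqType) (f : U -> T) (s : seq U) (P : T -> Prop) :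
  injective f -> uniq s -> (forall t, P t <-> exists2 x, x \in s & t = f x) ->
  has_card P (size s).
Proof.
move=> f_inj s_uniq sP; exists (List.map f s); split; [|split].
- exact: (Injective_map_NoDup f_inj (uniq_NoDup s_uniq)).
- by rewrite List.length_map length_size.
- move=> t; rewrite sP; split.
  + by case/in_map_iff=> x [<- /InP]; exists x.
  + by case=> x /InP x_in_s ->; apply: in_map.
Qed.

End ListCardinality.

Section TwoVertexTrees.

Context {m : nat} (A : 'M[bool]_m).

Definition edge_tree (p : 'I_m * 'I_m) : ctree m := CNode p.1 [:: CNode p.2 [::]].

Lemma edge_tree_inj : injective edge_tree.
Proof. by case=> [a b] [c d] [-> ->]. Qed.

Lemma valid_two_vertices (t : ctree m) :
  valid A t /\ nverts t = 2 <-> exists2 p, A p.1 p.2 & t = edge_tree p.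
Proof.
split; last by case=> [[i j] /= Aij ->].
case: t => i [|[j [|w grandch]] [|u ch]] //=; try by case.
- by case=> [[Aij _] _]; exists (i, j).
- by case=> _; case: u => ? ? /= /eqP; rewrite addSn addnS.
- by case=> _; case: w => ? ? /= /eqP; rewrite addn0 addSn.
- by case=> _; case: u => ? ? /= /eqP; rewrite addSn addnS.
Qed.

Lemma ones_count : ones A = count (fun p => A p.1 p.2) (enum {: 'I_m * 'I_m}).
Proof.
rewrite /ones pair_big /= -sum1_count [RHS]big_mkcond /= big_enum /=.
by apply: eq_bigr => p _; case: (A p.1 p.2).
Qed.

Lemma row_ones_count (i : 'I_m) : row_ones A i = count (A i) (enum 'I_m).
Proof.
rewrite /row_ones -sum1_count [RHS]big_mkcond /= big_enum /=.
by apply: eq_bigr => j _; case: (A i j).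
Qed.

Lemma tcount_two : tcount A 2 (ones A).
Proof.
rewrite ones_count -size_filter.
apply: has_card_map edge_tree_inj (filter_uniq _ (enum_uniq _)) _ => t.
rewrite valid_two_vertices.
by split=> -[p Ap ->]; exists p => //; move: Ap; rewrite mem_filter mem_enum ?andbT.
Qed.

Lemma troot_count_two (i : 'I_m) : troot_count A i 2 (row_ones A i).
Proof.
rewrite row_ones_count -size_filter.
have edge_i_inj : injective (fun j => edge_tree (i, j)).
  by move=> j k /edge_tree_inj [].
apply: has_card_map edge_i_inj (filter_uniq _ (enum_uniq _)) _ => t.
rewrite -and_assoc valid_two_vertices; split.
- by case=> -[[i' j] /= Aij ->] /= <-; exists j; rewrite // mem_filter Aij mem_enum.
- by case=> j; rewrite mem_filter => /andP[Aij _] ->; split => //; exists (i, j).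
Qed.

End TwoVertexTrees.

Theorem theorem10 (m : nat) (A B : 'M[bool]_m) :
  (tree_col_equiv A B -> ones A = ones B) /\
  (strict_tree_col_equiv A B -> forall i : 'I_m, row_ones A i = row_ones B i).
Proof.
split.
- move=> equivAB.
  have tcountB_onesA := proj1 (equivAB 2 _ isT) (tcount_two A).
  exact: has_card_unique tcountB_onesA (tcount_two B).
- move=> equivAB i.
  have troot_countB_onesA := proj1 (equivAB 2 _ i isT) (troot_count_two A i).
  exact: has_card_unique troot_countB_onesA (troot_count_two B i).
Qed.
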